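(* There is no binary self-orthogonal $[94,7,46]$ code.
   Context: A binary linear code $C$ is self-orthogonal if $C\subseteq C^\perp$. *)

From HB Require Import structures.
From mathcomp Require Import all_boot all_order all_algebra.
Set Implicit Arguments. Unset Strict Implicit. Unset Printing Implicit Defensive.
Import GRing.Theory.
Local Open Scope ring_scope.

Definition bin_code (n : nat) := {vspace 'rV['F_2]_n}.

Definition wt (n : nat) (x : 'rV['F_2]_n) : nat := #|[set i | x 0 i != 0]|.

Definition dotF2 (n : nat) (x y : 'rV['F_2]_n) : 'F_2 := \sum_(i < n) x 0 i * y 0 i.

Definition self_orthogonal (n : nat) (C : bin_code n) : Prop :=
  forall x y, x \in C -> y \in C -> dotF2 x y = 0.

(* Minimum distance of a linear code = minimum weight of a nonzero codeword. *)
Definition min_dist (n : nat) (C : bin_code n) (d : nat) : Prop :=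
  (exists2 x, x \in C & (x != 0) && (wt x == d)) /\
  (forall x, x \in C -> x != 0 -> (d <= wt x)%N).

Definition is_nkd_code (n k d : nat) (C : bin_code n) : Prop :=
  \dim C = k /\ min_dist C d.

From mathcomp Require Import all_boot all_order all_algebra.
From mathcomp Require Import all_field zify.
Set Implicit Arguments. Unset Strict Implicit. Unset Printing Implicit Defensive.
Import GRing.Theory.
Local Open Scope ring_scope.

(* In a self-orthogonal binary code all weights are even and any two codewords
   overlap in an even number of positions, so wt (x + y) = wt x + wt y modulo 4.
   Hence the doubly-even codewords D form a subgroup of index at most 2, i.e.
   |D| >= 64 for a code of dimension 7.  The nonzero words of D have weight
   >= 48 (a multiple of 4 that is >= 46), and the Plotkin bound for length 94
   and distance 48 gives |D| <= 96 / (96 - 94) = 48. *)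

Lemma F2_cases (a : 'F_2) : a = 0 \/ a = 1.
Proof. by case: a => [[|[|//]] ?]; [left|right]; apply/val_inj. Qed.

Lemma card_set_indicator (T : finType) (P : pred T) :
  #|[set i | P i]| = (\sum_i (P i : nat))%N.
Proof. by rewrite -sum1dep_card big_mkcond. Qed.

Section BinaryWeights.

Variable n : nat.
Implicit Types (x y : 'rV['F_2]_n) (C : bin_code n) (D : {set 'rV['F_2]_n}).

Definition overlap x y : nat := #|[set i | (x 0 i != 0) && (y 0 i != 0)]|.

Lemma wt0 : wt (0 : 'rV['F_2]_n) = 0%N.
Proof. by apply/eqP; rewrite cards_eq0; apply/eqP/setP => i; rewrite !inE mxE eqxx. Qed.

Lemma overlapxx x : overlap x x = wt x.
Proof. by apply: eq_card => i; rewrite !inE andbb. Qed.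

Lemma wtD x y : (wt (x + y) + 2 * overlap x y = wt x + wt y)%N.
Proof.
rewrite /wt /overlap !card_set_indicator big_distrr -!big_split /=.
apply: eq_bigr => i _; rewrite mxE.
by case: (F2_cases (x 0 i)) => ->; case: (F2_cases (y 0 i)) => ->.
Qed.

Lemma dotF2_overlap x y : dotF2 x y = (overlap x y)%:R.
Proof.
rewrite /dotF2 /overlap card_set_indicator natr_sum; apply: eq_bigr => i _.
by case: (F2_cases (x 0 i)) => ->; case: (F2_cases (y 0 i)) => ->;
  rewrite ?mulr0 ?mul0r ?mulr1 ?eqxx ?oner_eq0.
Qed.

Lemma self_orthogonal_overlap_even C x y :
  self_orthogonal C -> x \in C -> y \in C -> (2 %| overlap x y)%N.
Proof.
move=> soC xC yC; have /eqP := soC x y xC yC.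
by rewrite dotF2_overlap -(dvdn_pcharf (pchar_Fp (p := 2) isT)).
Qed.

Lemma self_orthogonal_wt_even C x : self_orthogonal C -> x \in C -> (2 %| wt x)%N.
Proof. by move=> soC xC; rewrite -overlapxx (self_orthogonal_overlap_even soC). Qed.

Lemma self_orthogonal_wtD_mod4 C x y : self_orthogonal C -> x \in C -> y \in C ->
  wt (x + y) = wt x + wt y %[mod 4].
Proof.
move=> soC xC yC; have := wtD x y; have := self_orthogonal_overlap_even soC xC yC.
lia.
Qed.

Definition doubly_even C := [set x | (x \in C) && (4 %| wt x)%N].

Section SelfOrthogonal.

Variables (C : bin_code n) (soC : self_orthogonal C).

Lemma doubly_evenD x y : x \in doubly_even C -> y \in doubly_even C ->
  x + y \in doubly_even C.
Proof.
rewrite !inE => /andP[xC x4] /andP[yC y4]; rewrite memvD //=.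
have := self_orthogonal_wtD_mod4 soC xC yC; lia.
Qed.

(* Two singly-even codewords add up to a doubly-even one, so C is covered by
   D and one coset of D. *)
Lemma card_code_le_doubly_even : (#|C| <= 2 * #|doubly_even C|)%N.
Proof.
set D := doubly_even C; have -> : #|C| = #|[set x | x \in C]| by rewrite cardsE.
have [CD | /subsetPn[c cC cD]] := boolP ([set x | x \in C] \subset D).
  by rewrite (leq_trans (subset_leq_card CD)) ?leq_pmull.
have {}cC : c \in C by rewrite inE in cC.
have cover : [set x | x \in C] \subset D :|: [set y - c | y in D].
  apply/subsetP => x; rewrite inE => xC.
  have [x4 | x4] := boolP (4 %| wt x)%N; first by rewrite inE inE xC x4.
  apply/setUP; right; apply/imsetP; exists (x + c); last by rewrite addrK.
  move: cD; rewrite !inE memvD //= cC /= => c4.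
  have := self_orthogonal_wtD_mod4 soC xC cC.
  have := self_orthogonal_wt_even soC xC; have := self_orthogonal_wt_even soC cC.
  move: x4 c4 => /negP x4 /negP c4; lia.
apply: leq_trans (subset_leq_card cover) (leq_trans (leq_card_setU _ _) _).
by rewrite (card_imset _ (addIr (- c))) addnn -mul2n.
Qed.

End SelfOrthogonal.

Section Plotkin.

Variables (D : {set 'rV['F_2]_n}) (d : nat).
Hypothesis addD : forall x y, x \in D -> y \in D -> x + y \in D.

Definition col_support (i : 'I_n) := [set x in D | x 0 i != 0].

(* Adding a fixed word of [col_support i] maps [col_support i] injectively
   into its complement in [D]. *)
Lemma card_col_support_le i : (2 * #|col_support i| <= #|D|)%N.
Proof.
set S := col_support i.
have [-> | [y yS]] := set_0Vmem S; first by rewrite cards0.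
have SD : S \subset D by apply/subsetP => z; rewrite inE => /andP[].
suff : (#|S| <= #|D :\: S|)%N by rewrite cardsD (setIidPr SD); lia.
rewrite -(card_imset _ (addIr y)); apply: subset_leq_card.
apply/subsetP => _ /imsetP[x xS ->]; move: (xS) (yS).
rewrite !inE => /andP[xD xi] /andP[yD yi]; rewrite addD //= andbT mxE.
by case: (F2_cases (x 0 i)) xi => -> //; case: (F2_cases (y 0 i)) yi => ->.
Qed.

Lemma sum_wt_le : (2 * \sum_(x in D) wt x <= n * #|D|)%N.
Proof.
have -> : (\sum_(x in D) wt x = \sum_i #|col_support i|)%N.
  under eq_bigr do rewrite /wt -sum1dep_card.
  rewrite (exchange_big_dep predT) //=; apply: eq_bigr => i _.
  by rewrite sum1dep_card.
rewrite big_distrr /= (@leq_trans (\sum_(i < n) #|D|)) //.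
  by apply: leq_sum => i _; exact: card_col_support_le.
by rewrite sum_nat_const card_ord.
Qed.

Hypothesis min_wtD : forall x, x \in D -> x != 0 -> (d <= wt x)%N.

Lemma sum_wt_ge : (d * #|D| <= d + \sum_(x in D) wt x)%N.
Proof.
have [D0 | D0] := boolP (0 \in D).
  rewrite (cardsD1 0) D0 (big_setD1 0 D0) wt0 mulnDr muln1 leq_add2l.
  rewrite mulnC -sum_nat_const; apply: leq_sum => x; rewrite !inE => /andP[x0 xD].
  exact: min_wtD.
rewrite mulnC -sum_nat_const (leq_trans _ (leq_addl _ _)) //; apply: leq_sum => x xD.
by apply: min_wtD => //; apply: contraTneq xD => ->.
Qed.

Lemma plotkin_bound : ((2 * d - n) * #|D| <= 2 * d)%N.
Proof. have := sum_wt_le; have := sum_wt_ge; nia. Qed.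

End Plotkin.

End BinaryWeights.

Theorem proposition6p9 :
  ~ exists C : bin_code 94, is_nkd_code 7 46 C /\ self_orthogonal C.
Proof.
move=> [C [[dimC [_ min_wtC]] soC]].
have cardC : #|C| = 128%N by rewrite card_vspace dimC card_Fp.
have min_wtD x : x \in doubly_even C -> x != 0 -> (48 <= wt x)%N.
  by rewrite inE => /andP[xC x4] x0; have := min_wtC x xC x0; lia.
have := card_code_le_doubly_even soC.
have := plotkin_bound (doubly_evenD soC) min_wtD.
(* [set] merges two syntactically different forms of the cardinal for [lia]. *)
by rewrite cardC; set m := #|doubly_even C|; lia.
Qed.
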